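(* Let $n$ be a positive integer, let $A(n)=(a_{ij})_{i,j\in\mathbb{N}}$ be the greedy matrix described in the context, and let $k,r\geq 1$. Let $\overline{A}=A^{kr}$ be the partial matrix described in the context, and let $x$ be the number of ones in the $k$-th row of $\overline{A}$. Then the number of integers $l\geq 1$ such that the cell $(k,l)$ is a galf of $\overline{A}$ is at most $x n^2$.
   Context: $\mathbb{N}=\{1,2,3,\dots\}$. Fix a positive integer $n$. The infinite $\{0,1\}$-matrix $A(n)=(a_{ij})_{i,j\in\mathbb{N}}$ (the greedy matrix) is defined recursively. Its entries are determined row by row (row $1$ first), and within each row from left to right, so that $a_{kl}$ is determined after all $a_{ij}$ with $i<k$ and all $a_{kj}$ with $j<l$. One sets $a_{kl}=1$ if and only if all of the following hold: (1) $\sum_{j<l}a_{kj}<n+1$; (2) $\sum_{i<k}a_{il}<n+1$; (3) there is no pair $(i,j)$ with $1\le i<k$, $1\le j<l$ and $a_{ij}=a_{il}=a_{kj}=1$. Otherwise $a_{kl}=0$. For $k,r\ge 1$, $A^{kr}$ denotes the $\mathbb{N}\times\mathbb{N}$ matrix that agrees with $A(n)$ in all entries of rows $1,\dots,k-1$ and in the entries $(k,1),\dots,(k,r-1)$, and is $0$ in all other entries (the matrix constructed so far just before $a_{kr}$ is determined). For a $\{0,1\}$-matrix $M=(m_{ij})$, a cell $(i,j)$ is a flag if $m_{ij}=1$, and it is a galf of $M$ if there exists a flag $(k',l')$ of $M$ with $k'\neq i$, $l'\neq j$ and $m_{k'l'}=m_{k'j}=m_{il'}=1$. *)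

(* Matrices indexed by N = {1,2,...} are encoded as
   functions nat -> nat -> bool; index 0 is unused (always false). *)
From mathcomp Require Import all_boot.
Set Implicit Arguments. Unset Strict Implicit. Unset Printing Implicit Defensive.

Definition bmat := nat -> nat -> bool.

(* Condition for a_{kl} = 1, given the rows 1..k-1 (in M) and the entries
   a_{k1},...,a_{k,l-1} of the current row (in r). *)
Definition entry_ok (n : nat) (M : bmat) (r : nat -> bool) (k l : nat) : bool :=
  [&& (\sum_(1 <= j < l) r j < n.+1),
      (\sum_(1 <= i < k) M i l < n.+1) &
      ~~ [exists i : 'I_k, exists j : 'I_l,
            [&& 1 <= (i : nat), 1 <= (j : nat), M i j, M i l & r j]]].

Fixpoint row_upto (n : nat) (M : bmat) (k l : nat) : nat -> bool :=
  match l with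
  | 0 => fun _ => false
  | l'.+1 =>
      let r := row_upto n M k l' in
      if entry_ok n M r k l'.+1 then (fun j => (j == l'.+1) || r j) else r
  end.

Fixpoint mat_upto (n : nat) (k : nat) : bmat :=
  match k with
  | 0 => fun _ _ => false
  | k'.+1 =>
      let M := mat_upto n k' in
      fun i j => if i == k'.+1 then row_upto n M k'.+1 j j else M i j
  end.

Definition greedy (n : nat) : bmat := fun i j => mat_upto n i i j.

Definition partial (n k r : nat) : bmat :=
  fun i j => ((i < k) || ((i == k) && (j < r))) && greedy n i j.

Definition galf (M : bmat) (i j : nat) : Prop :=
  exists k' l', [/\ 1 <= k', 1 <= l', k' <> i, l' <> j &
                   [&& M k' l', M k' j & M i l']].

From mathcomp Require Import all_boot.

(* If (k, l) is a galf of A^{kr}, it is witnessed by k' < k and l' < r with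
   a_{k l'} = a_{k' l'} = a_{k' l} = 1.  There are x choices of l' (the ones of
   row k), at most n choices of k' (column l' had fewer than n + 1 ones above
   row k when a_{k l'} was set), and, for fixed k' and l', at most n choices of
   l (row k' has at most n + 1 ones, one of which is l').  So the galfs of row
   k inject into a list of size at most x n^2. *)

Lemma sum_nat_of_bool_count (T : Type) (s : seq T) (a : pred T) :
  \sum_(i <- s) a i = count a s.
Proof.
by rewrite -sum1_count [RHS]big_mkcond; apply: eq_bigr => i _; case: (a i).
Qed.

Lemma size_flatten_map_le (S : eqType) (T : Type) (f : S -> seq T) (t : seq S) c :
  (forall x, x \in t -> size (f x) <= c) -> size (flatten (map f t)) <= size t * c.
Proof.
elim: t => [|x t IHt] //= fc; rewrite size_cat mulSn leq_add ?fc ?mem_head //.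
by apply: IHt => y ty; apply: fc; rewrite inE ty orbT.
Qed.

Section RowUpto.

Variables (n : nat) (M : bmat) (k : nat).

Lemma row_upto_gt l j : l < j -> row_upto n M k l j = false.
Proof.
elim: l => [|l IHl] lt_lj //=.
case: entry_ok => //=; rewrite IHl ?(ltnW lt_lj) // orbF.
by rewrite eq_sym ltn_eqF.
Qed.

Lemma row_upto_stable l j : j <= l -> row_upto n M k l j = row_upto n M k j j.
Proof.
elim: l => [|l IHl] le_jl; first by move: le_jl; rewrite leqn0 => /eqP ->.
have [->|ne_jl] := eqVneq j l.+1; first by [].
have le_jl' : j <= l by rewrite -ltnS ltn_neqAle ne_jl.
by rewrite /= -(IHl le_jl'); case: entry_ok => //=; rewrite (negbTE ne_jl).
Qed.

Lemma sum_row_upto_le l : \sum_(1 <= j < l.+1) row_upto n M k l j <= n.+1.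
Proof.
elim: l => [|l IHl]; first by rewrite big_geq.
rewrite big_nat_recr //=.
case ok: (entry_ok n M (row_upto n M k l) k l.+1).
  2: by rewrite row_upto_gt // addn0.
move: ok => /andP [row_lt _]; rewrite eqxx addn1.
suff -> : \sum_(1 <= j < l.+1) ((j == l.+1) || row_upto n M k l j) =
          \sum_(1 <= j < l.+1) row_upto n M k l j by [].
by apply: eq_big_nat => j /andP [_ lt_jl]; rewrite ltn_eqF.
Qed.

End RowUpto.

Lemma mat_upto_stable n k i j : i <= k -> mat_upto n k i j = greedy n i j.
Proof.
rewrite /greedy; elim: k => [|k IHk] le_ik /=.
  by move: le_ik; rewrite leqn0 => /eqP ->.
have [->|ne_ik] := eqVneq i k.+1; first by rewrite /= eqxx.
by apply: IHk; rewrite -ltnS ltn_neqAle ne_ik.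
Qed.

Lemma greedyS n k j : greedy n k.+1 j = row_upto n (mat_upto n k) k.+1 j j.
Proof. by rewrite /greedy /= eqxx. Qed.

Lemma greedy_row_le n k t : uniq t -> {subset t <= greedy n k} -> size t <= n.+1.
Proof.
case: k => [|k] uniq_t t_row.
  by case: t t_row {uniq_t} => [|j t] // /(_ j (mem_head _ _)).
pose m := \max_(j <- t) j.
pose R := row_upto n (mat_upto n k) k.+1 m.
apply: (@leq_trans (count R (iota 1 m))); last first.
  by move: (sum_row_upto_le n (mat_upto n k) k.+1 m);
     rewrite /index_iota subn1 sum_nat_of_bool_count.
rewrite -size_filter; apply: uniq_leq_size => // j tj.
have le_jm : j <= m := @leq_bigmax_seq _ t predT id j tj isT.
have row_kj : greedy n k.+1 j := t_row j tj.
have pos_j : 0 < j by case: j row_kj {tj le_jm} => //; rewrite greedyS.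
move: row_kj; rewrite greedyS mem_filter /R row_upto_stable // => ->.
by rewrite mem_iota add1n ltnS le_jm pos_j.
Qed.

Lemma greedy_col_count_le n k l :
  greedy n k.+1 l -> count (greedy n ^~ l) (iota 1 k) <= n.
Proof.
rewrite greedyS; case: l => [|l] //=.
case ok: entry_ok; last by rewrite row_upto_gt.
move: ok => /and3P [_ col_lt _] _.
have -> : count (greedy n ^~ l.+1) (iota 1 k) =
          \sum_(1 <= i < k.+1) mat_upto n k i l.+1.
  rewrite -sum_nat_of_bool_count /index_iota subn1; apply: eq_big_seq => i.
  by rewrite mem_iota add1n => /andP [_ lt_ik]; rewrite mat_upto_stable.
by rewrite -ltnS.
Qed.

Lemma size_greedy_row_other_le n i l s :
  uniq s -> greedy n i l -> size [seq j <- s | greedy n i j && (j != l)] <= n.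
Proof.
move=> uniq_s row_il; rewrite -ltnS.
apply: (@greedy_row_le n i (l :: [seq j <- s | greedy n i j && (j != l)])).
  by rewrite /= filter_uniq // andbT mem_filter eqxx andbF.
by move=> j; rewrite inE mem_filter => /predU1P [->|/andP [/andP []]].
Qed.

Lemma partial_rowE n k r j : partial n k r k j = (j < r) && greedy n k j.
Proof. by rewrite /partial ltnn eqxx. Qed.

Lemma galf_partial_rowP n k r l : galf (partial n k.+1 r) k.+1 l ->
  exists i l', [/\ i \in iota 1 k,
                   l' \in [seq j <- iota 1 r | partial n k.+1 r k.+1 j],
                   greedy n i l', greedy n i l & l' != l].
Proof.
case=> i [l' [pos_i pos_l' /eqP ne_ik /eqP ne_l'l /and3P [A_il' A_il A_kl']]].
rewrite /partial (negbTE ne_ik) !orbF in A_il' A_il.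
case/andP: A_il' => lt_ik row_il'; case/andP: A_il => _ row_il.
exists i, l'; split=> //; first by rewrite mem_iota pos_i add1n.
have lt_l'r : l' < r by move: A_kl'; rewrite partial_rowE => /andP [].
by rewrite mem_filter A_kl' mem_iota pos_l' add1n ltnW.
Qed.

Theorem lemma3p1 (n k r : nat) (hn : 1 <= n) (hk : 1 <= k) (hr : 1 <= r)
  (s : seq nat) :
  uniq s ->
  (forall l, l \in s -> 1 <= l /\ galf (partial n k r) k l) ->
  size s <= (\sum_(1 <= j < (r.+1)) partial n k r k j) * n ^ 2.
Proof.
case: k hk => [|k] // _ uniq_s s_galf.
pose X := [seq j <- iota 1 r | partial n k.+1 r k.+1 j].
pose above l' := [seq i <- iota 1 k | greedy n i l'].
pose beside i l' := [seq j <- s | greedy n i j && (j != l')].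
have -> : \sum_(1 <= j < r.+1) partial n k.+1 r k.+1 j = size X.
  by rewrite size_filter -sum_nat_of_bool_count /index_iota subn1.
apply: (@leq_trans (size (flatten [seq flatten [seq beside i l' | i <- above l']
                                   | l' <- X]))).
  apply: uniq_leq_size => // l sl; have [_ /galf_partial_rowP] := s_galf l sl.
  move=> [i [l' [ki Xl' row_il' row_il ne_l'l]]].
  apply/flatten_mapP; exists l' => //; apply/flatten_mapP; exists i.
    by rewrite mem_filter row_il' ki.
  by rewrite mem_filter row_il eq_sym ne_l'l sl.
rewrite -mulnn; apply: size_flatten_map_le => l'.
rewrite mem_filter partial_rowE => /andP [/andP [_ row_kl'] _].
apply: (@leq_trans (size (above l') * n)).
  apply: size_flatten_map_le => i; rewrite mem_filter => /andP [row_il' _].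
  exact: size_greedy_row_other_le.
by rewrite leq_mul2r size_filter greedy_col_count_le ?orbT.
Qed.
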